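(* Let $t,d \ge 1$ and let $m$ be an integer with $1 \le m \le n/d$. Let $\mathcal{G}'_{t,d}$ be the class of partially colored graphs obtained by taking a graph $G \in \mathcal{G}_{t,d}$, choosing a set of $dm$ of its $n$ vertices, and coloring these $dm$ vertices bijectively with the colors $\{1,\ldots,dm\}$ (the remaining vertices uncolored), with graphs considered up to color-preserving isomorphism. Then $$\log |\mathcal{G}'_{t,d}| \le \log |\mathcal{G}_{t,d}| + n \log n - (n-md)\log(n-md) - dm + O(\log n).$$
   Context: All logarithms are base 2. A graph $G$ on $n$ vertices has a $d$-dimensional $t$-representation if each vertex can be assigned a set of at most $t$ pairwise disjoint $d$-dimensional axis-parallel boxes (products of $d$ closed real intervals) such that distinct vertices are adjacent iff some box of one intersects some box of the other. $\mathcal{G}_{t,d}$ is the class of unlabeled $n$-vertex graphs having such a representation. *)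

From mathcomp Require Import all_boot all_fingroup.
From Stdlib Require Import Reals ClassicalDescription.
Set Implicit Arguments. Unset Strict Implicit. Unset Printing Implicit Defensive.

Definition pb (P : Prop) : bool :=
  if excluded_middle_informative P then true else false.

(* base-2 logarithm on reals (Stdlib ln is 0 on nonpositive arguments,
   so 0 * log2 0 = 0) *)
Definition log2 (x : R) : R := (ln x / ln 2)%R.

Definition graph n := {set 'I_n * 'I_n}.
Definition adj n (g : graph n) (u v : 'I_n) : bool := (u, v) \in g.
Definition is_graph n (g : graph n) : Prop :=
  forall u v, adj g u v = adj g v u /\ adj g u u = false.

(* a box is prod_i [lo i, hi i], with lo i <= hi i *)
Definition box d := (('I_d -> R) * ('I_d -> R))%type.
Definition box_ok d (b : box d) : Prop := forall i, (b.1 i <= b.2 i)%R.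
(* two products of closed intervals intersect iff they overlap in every coordinate *)
Definition box_meet d (b1 b2 : box d) : Prop :=
  forall i, (b1.1 i <= b2.2 i)%R /\ (b2.1 i <= b1.2 i)%R.

Definition has_rep (t d : nat) n (g : graph n) : Prop :=
  exists rep : 'I_n -> list (box d),
    (forall v, size (rep v) <= t) /\
    (forall v b, List.In b (rep v) -> box_ok b) /\
    (forall v i j, i < size (rep v) -> j < size (rep v) -> i <> j ->
        ~ box_meet (List.nth i (rep v) (fun _ => 0%R, fun _ => 0%R))
                   (List.nth j (rep v) (fun _ => 0%R, fun _ => 0%R))) /\
    (forall u v, u <> v ->
        (adj g u v <-> exists b1 b2, List.In b1 (rep u) /\ List.In b2 (rep v)
                                     /\ box_meet b1 b2)).

Definition num_classes (T : finType) (S : {set T}) (r : T -> T -> Prop) : nat :=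
  #|[set [set y in S | pb (r x y)] | x in S]|.

Definition graph_iso n (g h : graph n) : Prop :=
  exists s : {perm 'I_n}, forall u v, adj g u v = adj h (s u) (s v).

Definition Gtd_labeled (t d n : nat) : {set graph n} :=
  [set g | pb (is_graph g /\ has_rep t d g)].

Definition card_Gtd (t d n : nat) : nat := num_classes (Gtd_labeled t d n) (@graph_iso n).

(* a coloring assigns to each vertex either no color or a color in 'I_k
   (colors {1..k} represented as 'I_k); a valid one is a bijection from the
   colored vertices onto all k colors *)
Definition pcgraph n k := (graph n * {ffun 'I_n -> option 'I_k})%type.
Definition valid_coloring n k (c : {ffun 'I_n -> option 'I_k}) : Prop :=
  (forall u v (a : 'I_k), c u = Some a -> c v = Some a -> u = v) /\
  (forall a : 'I_k, exists v, c v = Some a).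

Definition Gtd'_labeled (t d n m : nat) : {set pcgraph n (d * m)} :=
  [set gc | pb (is_graph gc.1 /\ has_rep t d gc.1 /\ valid_coloring gc.2)].

Definition pc_iso n k (x y : pcgraph n k) : Prop :=
  exists s : {perm 'I_n},
    (forall u v, adj x.1 u v = adj y.1 (s u) (s v)) /\
    (forall v, x.2 v = y.2 (s v)).

Definition card_Gtd' (t d n m : nat) : nat :=
  num_classes (Gtd'_labeled t d n m) (@pc_iso n (d * m)).

(* Forgetting the colouring maps G'_{t,d} onto G_{t,d}, and inside one
   isomorphism class of uncoloured graphs a coloured class is determined, after
   relabelling the graph to a fixed representative, by where the dm colours
   sit: an injection from the colours into the n vertices.  Hence
   |G'_{t,d}| <= |G_{t,d}| * n (n-1) ... (n-dm+1).  Comparing the logarithm of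
   this falling factorial with x ln x - x, whose increments are bounded by
   1 <= (x+1) (ln (x+1) - ln x), gives the Stirling-type estimate
   ln (n (n-1) ... (n-dm+1)) <= n ln n - (n-dm) ln (n-dm) - dm + ln n + 1. *)
From mathcomp Require Import all_boot all_fingroup.
From Stdlib Require Import Reals Lra ClassicalDescription.

Set Implicit Arguments.
Unset Strict Implicit.
Unset Printing Implicit Defensive.

Lemma pbP (P : Prop) : reflect P (pb P).
Proof. by rewrite /pb; case: excluded_middle_informative => H; constructor. Qed.

Lemma num_classes_le (T U : finType) (S : {set T}) (r : T -> T -> Prop)
    (D : {set U}) (F : U -> {set T}) :
  (forall x, x \in S -> exists2 u, u \in D & [set y in S | pb (r x y)] = F u) ->
  num_classes S r <= #|D|.
Proof.
move=> classF; apply: leq_trans (leq_imset_card F D).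
apply/subset_leq_card/subsetP => _ /imsetP [x xS ->].
by have [u uD ->] := classF x xS; apply: imset_f.
Qed.

Section PartialColourings.

Variables n k : nat.

Lemma pc_iso_sym (x y : pcgraph n k) : pc_iso x y -> pc_iso y x.
Proof.
move=> [s [adj_s col_s]]; exists s^-1%g; split => [u v|v].
  by rewrite adj_s !permKV.
by rewrite col_s permKV.
Qed.

Lemma pc_iso_trans (x y z : pcgraph n k) :
  pc_iso x y -> pc_iso y z -> pc_iso x z.
Proof.
move=> [s [adj_s col_s]] [r [adj_r col_r]]; exists (s * r)%g; split => [u v|v].
  by rewrite adj_s adj_r !permM.
by rewrite col_s col_r permM.
Qed.

Lemma pc_class_eq (S : {set pcgraph n k}) (x z : pcgraph n k) :
  pc_iso x z -> [set y in S | pb (pc_iso x y)] = [set y in S | pb (pc_iso z y)].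
Proof.
move=> xz; apply/setP => y; rewrite !inE; congr (_ && _).
apply/pbP/pbP => [xy|zy]; last exact: pc_iso_trans xz zy.
exact: pc_iso_trans (pc_iso_sym xz) xy.
Qed.

Definition relabel (s : {perm 'I_n}) (c : {ffun 'I_n -> option 'I_k}) :
  {ffun 'I_n -> option 'I_k} := [ffun v => c (s^-1%g v)].

Lemma valid_coloring_relabel s c :
  valid_coloring c -> valid_coloring (relabel s c).
Proof.
move=> [c_inj c_onto]; split => [u v a|a].
  by rewrite !ffunE => cu cv; apply: (@perm_inj _ s^-1%g); apply: c_inj cu cv.
by have [v cv] := c_onto a; exists (s v); rewrite ffunE permK.
Qed.

Lemma pc_iso_relabel (x : pcgraph n k) (g : graph n) (s : {perm 'I_n}) :
  (forall u v, adj x.1 u v = adj g (s u) (s v)) -> pc_iso x (g, relabel s x.2).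
Proof. by move=> adj_s; exists s; split => // v; rewrite ffunE permK. Qed.

Lemma card_valid_colorings :
  #|[set c : {ffun 'I_n -> option 'I_k} | pb (valid_coloring c)]| <= n ^_ k.
Proof.
set I := [set f : {ffun 'I_k -> 'I_n} | injectiveb f].
pose colour_of (f : {ffun 'I_k -> 'I_n}) : {ffun 'I_n -> option 'I_k} :=
  [ffun v => [pick a | f a == v]].
apply: (@leq_trans #|[set colour_of f | f in I]|);
  last by apply: leq_trans (leq_imset_card _ _) _; rewrite card_inj_ffuns !card_ord.
apply/subset_leq_card/subsetP => c; rewrite inE => /pbP [c_inj c_onto].
have [pos pos_col] := fin_all_exists c_onto.
apply/imsetP; exists (finfun pos).
  rewrite inE; apply/injectiveP => a b; rewrite !ffunE => ab.
  by have := pos_col a; rewrite ab pos_col; case.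
apply/ffunP => v; rewrite ffunE; case: pickP => [a /eqP <-|no_pos].
  by rewrite ffunE pos_col.
case cv: (c v) => [a|] //.
by have := no_pos a; rewrite ffunE (c_inj _ _ _ (pos_col a) cv) eqxx.
Qed.

End PartialColourings.

Lemma card_Gtd'_le t d n m :
  card_Gtd' t d n m <= card_Gtd t d n * n ^_ (d * m).
Proof.
set Q := [set [set y in Gtd_labeled t d n | pb (graph_iso x y)]
           | x in Gtd_labeled t d n].
set V := [set c : {ffun 'I_n -> option 'I_(d * m)} | pb (valid_coloring c)].
pose repr_of (X : {set graph n}) := odflt set0 [pick g in X].
pose F (p : {set graph n} * {ffun 'I_n -> option 'I_(d * m)}) :=
  [set y in Gtd'_labeled t d n m | pb (pc_iso (repr_of p.1, p.2) y)].
apply: (@leq_trans #|setX Q V|);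
  last by rewrite cardsX leq_mul2l card_valid_colorings orbT.
apply: (num_classes_le (F := F)) => x; rewrite inE => /pbP [x_graph [x_rep x_col]].
set X := [set y in Gtd_labeled t d n | pb (graph_iso x.1 y)].
have xX : x.1 \in X.
  rewrite !inE; apply/andP; split; apply/pbP; first by [].
  by exists 1%g => u v; rewrite !perm1.
have XQ : X \in Q by apply/imsetP; exists x.1 => //; rewrite inE; apply/pbP.
have reprX : repr_of X \in X.
  by rewrite /repr_of; case: pickP => [g ->|/(_ x.1)]; rewrite ?xX.
move: reprX; rewrite inE => /andP [_ /pbP [s adj_s]].
exists (X, relabel s x.2); first by rewrite !inE XQ; apply/pbP/valid_coloring_relabel.
exact/pc_class_eq/pc_iso_relabel.
Qed.

Open Scope R_scope.

Lemma ln_0 : ln 0 = 0.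
Proof. by rewrite /ln; case: Rlt_dec => // /Rlt_irrefl []. Qed.

Lemma ln_le x y : 0 < x -> x <= y -> ln x <= ln y.
Proof. by move=> x_gt0 [xy|<-]; [left; apply: ln_increasing | right]. Qed.

Lemma ln_le_sub1 x : 0 < x -> ln x <= x - 1.
Proof. by move=> x_gt0; have := exp_ineq1_le (ln x); rewrite exp_ln //; lra. Qed.

Lemma ln2_lt1 : ln 2 < 1.
Proof.
rewrite -[X in _ < X]ln_exp; apply: ln_increasing; first lra.
by have := exp_ineq1 1 R1_neq_R0; lra.
Qed.

Lemma ln_INR_ge0 (a : nat) : 0 <= ln (INR a).
Proof.
case: a => [|a]; first by rewrite ln_0; lra.
by rewrite -ln_1; apply: ln_le; rewrite ?S_INR; have := pos_INR a; lra.
Qed.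

Lemma ln_INR_mul_le (a b c : nat) :
  (a <= b * c)%nat -> ln (INR a) <= ln (INR b) + ln (INR c).
Proof.
case: a => [|a] abc.
  by rewrite ln_0; have := ln_INR_ge0 b; have := ln_INR_ge0 c; lra.
have [b_gt0 c_gt0] : (0 < b)%nat /\ (0 < c)%nat.
  by apply/andP; rewrite -muln_gt0 (leq_trans _ abc).
rewrite -ln_mult -?mult_INR; try by apply: (lt_INR 0); apply/ltP.
by apply: ln_le; [apply: (lt_INR 0); apply/ltP | apply: le_INR; apply/leP].
Qed.

Lemma log2_INR_mul_le (a b c : nat) :
  (a <= b * c)%nat -> log2 (INR a) <= log2 (INR b) + log2 (INR c).
Proof.
move=> abc; rewrite /log2 -Rdiv_plus_distr.
apply: Rmult_le_compat_r; last exact: ln_INR_mul_le.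
by left; apply: Rinv_0_lt_compat; have := ln_lt_2; lra.
Qed.

Lemma ln_succ_increment x : 0 < x -> (x + 1) * ln x + 1 <= (x + 1) * ln (x + 1).
Proof.
move=> x_gt0.
have ratio_pos : 0 < x / (x + 1) by apply: Rdiv_lt_0_compat; lra.
have := ln_le_sub1 ratio_pos.
rewrite /Rdiv ln_mult ?ln_Rinv; try (apply: Rinv_0_lt_compat; lra); try lra.
have -> : x * / (x + 1) - 1 = - / (x + 1) by field; lra.
move=> ln_ratio; have x1_ge0 : 0 <= x + 1 by lra.
have := Rmult_le_compat_l _ _ _ x1_ge0 ln_ratio.
have -> : (x + 1) * - / (x + 1) = -1 by field; lra.
lra.
Qed.

Lemma ln_ffact_le (a k : nat) :
  ln (INR ((a + k) ^_ k)) <=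
  INR (a + k) * ln (INR (a + k)) - INR a * ln (INR a) - INR k
  + ln (INR (a + k)) + 1.
Proof.
elim: k => [|k IH].
  by rewrite addn0 ffactn0 /= ln_1; have := ln_INR_ge0 a; lra.
have [/eqP|ak_gt0] := posnP (a + k).
  by rewrite addn_eq0 => /andP [/eqP -> /eqP ->] /=; rewrite ln_1; lra.
rewrite addnS ffactnS succnK mult_INR !S_INR.
have ak_pos : 0 < INR (a + k) by apply: (lt_INR 0); apply/ltP.
rewrite ln_mult; first last.
- by apply: (lt_INR 0); apply/ltP; rewrite ffact_gt0 leq_addl.
- by lra.
by have := ln_succ_increment ak_pos; lra.
Qed.

(* For n >= 2 the error term ln n + 1 of ln_ffact_le, together with the
   difference between k and k ln 2, fits into 3 ln n. *)
Lemma log2_ffact_le (n k : nat) : (2 <= n)%nat -> (k <= n)%nat ->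
  log2 (INR (n ^_ k)) <=
  INR n * log2 (INR n) - INR (n - k) * log2 (INR (n - k)) - INR k
  + 3 * log2 (INR n).
Proof.
move=> n_ge2 kn; rewrite /log2.
have ln2_gt := ln_lt_2; have ln2_lt := ln2_lt1.
have ln_n_ge : ln 2 <= ln (INR n) by apply: ln_le; [lra | apply: (le_INR 2); apply/leP].
have k_ln2 : INR k * ln 2 <= INR k by have := pos_INR k; nra.
have := ln_ffact_le (n - k) k; rewrite subnK // => ffact_le.
set E := INR n * ln (INR n) - INR (n - k) * ln (INR (n - k)) - INR k * ln 2
         + 3 * ln (INR n).
have -> : INR n * (ln (INR n) / ln 2) - INR (n - k) * (ln (INR (n - k)) / ln 2)
          - INR k + 3 * (ln (INR n) / ln 2) = E / ln 2 by rewrite /E; field; lra.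
by apply: Rmult_le_compat_r; [left; apply: Rinv_0_lt_compat | rewrite /E]; lra.
Qed.

Close Scope R_scope.

Theorem proposition1 (t d : nat) (Ht : 1 <= t) (Hd : 1 <= d) :
  exists (C : R) (N : nat), forall n m : nat,
    N <= n -> 1 <= m -> d * m <= n ->
    (log2 (INR (card_Gtd' t d n m))
     <= log2 (INR (card_Gtd t d n))
        + INR n * log2 (INR n)
        - INR (n - d * m) * log2 (INR (n - d * m))
        - INR (d * m)
        + C * log2 (INR n))%R.
Proof.
exists 3%R, 2 => n m n_ge2 _ dm_le_n.
have := log2_INR_mul_le (card_Gtd'_le t d n m).
have := log2_ffact_le n_ge2 dm_le_n.
lra.
Qed.
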